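(* Let $\kappa$ be a regular infinite cardinal and $\mu$ a singular cardinal with $\mathrm{cf}(\mu)=\kappa$. Then $w({}^{\kappa}\mu,\mathrm{bd})=\mu^{<\kappa}$, $w({}^{\mu}2,\mathrm{bd})=w({}^{\mu}\kappa,\mathrm{bd})=2^{<\mu}$, and $w({}^{\mu}\mu,\mathrm{bd})=\mu^{<\mu}$. Furthermore, for each $X\in\{{}^{\kappa}\mu,{}^{\mu}2,{}^{\mu}\kappa,{}^{\mu}\mu\}$, the space $(X,\mathrm{bd})$ has an open partition of cardinality $w(X,\mathrm{bd})$.
   Context: For ordinals $\delta,\rho$, ${}^{\delta}\rho$ is the set of functions $\delta\to\rho$; for a partial function $s\colon\delta\rightharpoonup\rho$, $[s]=\{f\in{}^{\delta}\rho: s\subseteq f\}$. The bounded topology on ${}^{\delta}\rho$ has base $\{[s]: s\in{}^{\alpha}\rho,\ \alpha<\delta\}$; $(X,\mathrm{bd})$ denotes $X$ with this topology. $w(X,\tau)$ is the weight (least size of a base). An open partition of a space is a family of pairwise disjoint nonempty open sets whose union is the whole space. *)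

From HB Require Import structures.
From mathcomp Require Import all_boot all_order all_algebra.
From mathcomp Require Import all_classical.
Set Implicit Arguments. Unset Strict Implicit. Unset Printing Implicit Defensive.
Local Open Scope classical_set_scope.
Local Open Scope card_scope.

(* Ordinals are represented by well-ordered types (D, lt). *)
Definition well_order {T : Type} (lt : T -> T -> Prop) :=
  [/\ (forall x, ~ lt x x), (forall x y z, lt x y -> lt y z -> lt x z),
      (forall x y, [\/ lt x y, x = y | lt y x]) & well_founded lt].

Definition card_lt {T U : Type} (A : set T) (B : set U) := A #<= B /\ ~ (B #<= A).

(* (T, lt) is an initial ordinal, i.e. a cardinal: every proper initial segment
   has strictly smaller cardinality *)
Definition initial_ordinal {T : Type} (lt : T -> T -> Prop) :=
  well_order lt /\ forall a : T, card_lt [set b | lt b a] [set: T].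

Definition infinite_cardinal {T : Type} (lt : T -> T -> Prop) :=
  initial_ordinal lt /\ infinite_set [set: T].

Definition cofinal {T : Type} (lt : T -> T -> Prop) (C : set T) :=
  forall a, exists b, C b /\ ~ lt b a.

Definition regular {T : Type} (lt : T -> T -> Prop) :=
  forall C, cofinal lt C -> [set: T] #<= C.

Definition singular {T : Type} (lt : T -> T -> Prop) :=
  exists C, cofinal lt C /\ card_lt C [set: T].

(* cf(T, lt) = |K| : least cardinality of a cofinal subset *)
Definition cf_is {T : Type} (lt : T -> T -> Prop) (K : Type) :=
  (exists C, cofinal lt C /\ C #= [set: K]) /\
  (forall C, cofinal lt C -> [set: K] #<= C).

(* type whose cardinality is rho^{<delta} = | U_{alpha<delta} ^alpha rho | *)
Definition lt_pow {D : Type} (lt : D -> D -> Prop) (R : Type) :=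
  {a : D & {b : D | lt b a} -> R}.

Definition bd_basic {D R : Type} (lt : D -> D -> Prop) (a : D)
    (s : {b : D | lt b a} -> R) : set (D -> R) :=
  [set g | forall b (h : lt b a), g b = s (exist _ b h)].

Definition bd_open {D R : Type} (lt : D -> D -> Prop) (O : set (D -> R)) :=
  forall f, O f -> exists (a : D) (s : {b : D | lt b a} -> R),
    @bd_basic D R lt a s f /\ @bd_basic D R lt a s `<=` O.

Definition is_base {X : Type} (op : set X -> Prop) (B : set (set X)) :=
  (forall b, B b -> op b) /\
  (forall O x, op O -> O x -> exists b, [/\ B b, b x & b `<=` O]).

(* w(X, op) = |L| *)
Definition weight_is {X U : Type} (op : set X -> Prop) (L : set U) :=
  (exists B, is_base op B /\ B #= L) /\ (forall B, is_base op B -> L #<= B).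

Definition open_partition {X : Type} (op : set X -> Prop) (P : set (set X)) :=
  [/\ (forall U, P U -> op U /\ U !=set0),
      (forall U V, P U -> P V -> U <> V -> U `&` V = set0)
    & (forall x, exists U, P U /\ U x)].

From HB Require Import structures.
From mathcomp Require Import all_boot all_order all_algebra.
From mathcomp Require Import all_classical.
From Stdlib Require Import ClassicalEpsilon ProofIrrelevance Eqdep.
Set Implicit Arguments. Unset Strict Implicit. Unset Printing Implicit Defensive.
Local Open Scope classical_set_scope.
Local Open Scope card_scope.

(* For an initial ordinal δ the sets [s], s ∈ ^αR, α < δ, form a base of size
   |R^{<δ}|, and no base is smaller than an open partition; so each weight is
   witnessed by an open partition of size |R^{<δ}|.  Such partitions come from
   stopping times β : ^δR → δ, i.e. β f depends only on f↾β f: the sets [f↾β f]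
   partition the space, and there are |R^{<δ}| of them as soon as every
   s ∈ ^αR can be planted in some f from which f↾β f recovers s.
   For ^κμ the value f 0 names the length of s.  For ^μR, where cf μ = κ < μ,
   the values of f below an ordinal c0 of size κ name a point c of a cofinal
   set of size κ, and s ∈ ^αR with α < c is stored above c0 through a pairing
   injection c × c → c (Hessenberg).  The same pairing codes s ∈ ^ακ by a 0-1
   sequence of a larger length < μ, whence |κ^{<μ}| = |2^{<μ}|. *)

Lemma card_le_inj T U (A : set T) (B : set U) (f : T -> U) :
  (forall x, A x -> B (f x)) ->
  (forall x y, A x -> A y -> f x = f y -> x = y) -> A #<= B.
Proof.
move=> fAB finj.
have [g] : $|{injfun A >-> B}|.
  apply/injfunPex; exists f; first by move=> x; apply: fAB.
  by move=> x y; rewrite !inE; apply: finj.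
exact: (inj_card_le g).
Qed.

Lemma card_le_inj_ex T U (A : set T) (B : set U) : A #<= B -> A !=set0 ->
  exists f : T -> U, (forall x, A x -> B (f x)) /\
    (forall x y, A x -> A y -> f x = f y -> x = y).
Proof.
move=> AB [x0 Ax0].
elim/Ppointed: U => U in B AB *.
  by rewrite card_le_emptyr in AB; move/eqP: AB => AB; rewrite AB in Ax0.
move/pcard_leP: AB => [g].
have /injfunPex [f ff fi] : $|{injfun A >-> B}| by squash g.
exists f; split; first by move=> x Ax; apply: ff.
by move=> x y Ax Ay; apply: fi; rewrite inE.
Qed.

Lemma card_le_surj T U (S : set U) (X : set T) (g : T -> U) :
  S `<=` g @` X -> S #<= X.
Proof. by move=> sub; apply: (card_le_trans (subset_card_le sub)); exact: card_image_le. Qed.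

Lemma card_le_square T U (A : set T) (B : set U) (f : T -> U) :
  (forall x, A x -> B (f x)) -> (forall x y, A x -> A y -> f x = f y -> x = y) ->
  [set p | A p.1 /\ A p.2] #<= [set p | B p.1 /\ B p.2].
Proof.
move=> fAB finj; apply: (card_le_inj (f := fun p => (f p.1, f p.2))).
  by move=> p [h1 h2]; split; apply: fAB.
move=> [x1 x2] [y1 y2] [h1 h2] [h3 h4] /= [e1 e2].
by rewrite (finj x1 y1 h1 h3 e1) (finj x2 y2 h2 h4 e2).
Qed.

Lemma infinite_set_two T (A : set T) :
  infinite_set A -> exists a0 a1, [/\ A a0, A a1 & a0 <> a1].
Proof.
move=> infA; have [a0 A0] := infinite_setN0 infA.
have [a1 [A1 n1]] := infinite_setN0 (infinite_setD infA (finite_set1 a0)).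
by exists a0, a1; split => // e; apply: n1; rewrite e.
Qed.

Definition extend_along {T U V} (t0 : T) (A : set T) (e : T -> U) (g : T -> V)
    (v0 : V) (y : U) : V :=
  if `[< exists x, A x /\ e x = y >]
  then g (epsilon (inhabits t0) (fun x => A x /\ e x = y)) else v0.

Lemma extend_alongE T U V (t0 : T) (A : set T) (e : T -> U) (g : T -> V) v0 x :
  (forall x y, A x -> A y -> e x = e y -> x = y) -> A x ->
  extend_along t0 A e g v0 (e x) = g x.
Proof.
move=> e_inj Ax; rewrite /extend_along; case: asboolP => [ex|]; last by case; exists x.
have [Ax' ex'] := epsilon_spec (inhabits t0) (fun x' => A x' /\ e x' = e x) ex.
by rewrite (e_inj _ _ Ax' Ax ex').
Qed.

Lemma extend_along_out T U V (t0 : T) (A : set T) (e : T -> U) (g : T -> V) v0 y :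
  ~ (exists x, A x /\ e x = y) -> extend_along t0 A e g v0 y = v0.
Proof. by rewrite /extend_along; case: asboolP. Qed.

Definition seg {T} (lt : T -> T -> Prop) (c : T) : set T := [set x | lt x c].

Definition sq {T} (lt : T -> T -> Prop) (c : T) : set (T * T) :=
  [set p | lt p.1 c /\ lt p.2 c].

Definition closed_sq {T} (lt : T -> T -> Prop) (c : T) : set (T * T) :=
  [set p | ~ lt c p.1 /\ ~ lt c p.2].

Definition wmin {T} (lt : T -> T -> Prop) (d : T) (S : set T) : T :=
  epsilon (inhabits d) (fun m => S m /\ forall y, S y -> ~ lt y m).

Definition wsucc {T} (lt : T -> T -> Prop) (a : T) : T := wmin lt a [set b | lt a b].

Definition wmax {T} (lt : T -> T -> Prop) (a b : T) : T := if `[< lt a b >] then b else a.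

Section WellOrder.
Variables (T : Type) (lt : T -> T -> Prop).
Hypothesis wo : well_order lt.

Lemma wo_irr x : ~ lt x x.
Proof. by case: wo. Qed.

Lemma wo_trans x y z : lt x y -> lt y z -> lt x z.
Proof. by case: wo => _ tr _ _; exact: tr. Qed.

Lemma wo_total x y : [\/ lt x y, x = y | lt y x].
Proof. by case: wo. Qed.

Lemma wo_asym x y : lt x y -> ~ lt y x.
Proof. by move=> xy yx; exact: (wo_irr (wo_trans xy yx)). Qed.

Lemma wo_nlt x y : ~ lt x y -> x = y \/ lt y x.
Proof. by move=> nxy; case: (wo_total x y) => h; [|left|right]. Qed.

Lemma wo_le_lt x y z : ~ lt y x -> lt y z -> lt x z.
Proof. by move=> /wo_nlt [->//|xy yz]; exact: (wo_trans xy yz). Qed.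

Lemma wo_lt_le x y z : lt x y -> ~ lt z y -> lt x z.
Proof. by move=> xy /wo_nlt [->//|yz]; exact: (wo_trans xy yz). Qed.

Lemma wo_min (S : set T) : S !=set0 -> exists m, S m /\ forall y, S y -> ~ lt y m.
Proof.
move=> [x Sx]; apply: contrapT => nmin.
suff : forall y, ~ S y by move/(_ x).
move=> y; have wf : well_founded lt by case: wo.
elim: (wf y) => z _ IH Sz; apply: nmin; exists z; split=> // w Sw wz.
exact: (IH w wz Sw).
Qed.

Lemma wo_bottom (d : T) : exists z, forall y, ~ lt y z.
Proof. by have [z [_ zmin]] := @wo_min setT (ex_intro _ d I); exists z => y; apply: zmin. Qed.

Lemma wminP d S : S !=set0 ->
  S (wmin lt d S) /\ forall y, S y -> ~ lt y (wmin lt d S).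
Proof. by move=> S0; exact: (epsilon_spec (inhabits d) _ (wo_min S0)). Qed.

Lemma wmax_l a b : ~ lt (wmax lt a b) a.
Proof. by rewrite /wmax; case: asboolP => [/wo_asym|_]; last exact: wo_irr. Qed.

Lemma wmax_r a b : ~ lt (wmax lt a b) b.
Proof.
rewrite /wmax; case: asboolP => h; first exact: wo_irr.
by case: (wo_total a b) => [//|->|//]; exact: wo_irr.
Qed.

Lemma wmax_lt a b c : lt a c -> lt b c -> lt (wmax lt a b) c.
Proof. by rewrite /wmax; case: asboolP. Qed.

Lemma infinite_seg_le c m :
  infinite_set (seg lt c) -> ~ lt m c -> infinite_set (seg lt m).
Proof.
by move=> infc mc fin; apply: infc; apply: sub_finite_set fin => x xc; exact: (wo_lt_le xc mc).
Qed.

Hypothesis no_max : forall a, exists b, lt a b.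

Lemma wsuccP a : lt a (wsucc lt a) /\ forall b, lt a b -> ~ lt b (wsucc lt a).
Proof. by apply: wminP; case: (no_max a) => b ab; exists b. Qed.

Lemma wsucc_inj a b : wsucc lt a = wsucc lt b -> a = b.
Proof.
move=> e; have [ha1 ha2] := wsuccP a; have [hb1 hb2] := wsuccP b.
case: (wo_total a b) => [ab|//|ba]; exfalso.
- by apply: (ha2 _ ab); rewrite e.
- by apply: (hb2 _ ba); rewrite -e.
Qed.

Lemma wsucc_mono a b : lt a b -> lt (wsucc lt a) (wsucc lt b).
Proof.
move=> ab; have [_ h] := wsuccP a; have [h2 _] := wsuccP b.
exact: (wo_le_lt (h b ab) h2).
Qed.

Lemma bottom_lt_wsucc z : (forall y, ~ lt y z) -> forall a, lt z (wsucc lt a).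
Proof. by move=> hz a; have [h _] := wsuccP a; exact: (wo_le_lt (hz a) h). Qed.

End WellOrder.

Lemma wo_incr_inj W V (ltW : W -> W -> Prop) (ltV : V -> V -> Prop)
    (A : set W) (f : W -> V) :
  well_order ltW -> well_order ltV ->
  (forall x y, A x -> A y -> ltW x y -> ltV (f x) (f y)) ->
  forall x y, A x -> A y -> f x = f y -> x = y.
Proof.
move=> woW woV incr x y Ax Ay e; case: (wo_total woW x y) => [h|//|h].
- by have := incr _ _ Ax Ay h; rewrite e => /(wo_irr woV).
- by have := incr _ _ Ay Ax h; rewrite e => /(wo_irr woV).
Qed.

(* Transfinite recursion: G w is the least element of S not yet listed below w. *)
Lemma increasing_enum W V (ltW : W -> W -> Prop) (ltV : V -> V -> Prop)
    (A : set W) (S : set V) (v0 : V) :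
  well_order ltW -> well_order ltV ->
  (forall w, A w -> forall g : W -> V, ~ (S `<=` g @` (A `&` seg ltW w))) ->
  exists G : W -> V, [/\ (forall w, A w -> S (G w)),
    (forall w1 w2, A w1 -> A w2 -> ltW w1 w2 -> ltV (G w1) (G w2)) &
    (forall w y, A w -> S y -> ltV y (G w) ->
       exists w', [/\ A w', ltW w' w & G w' = y])].
Proof.
move=> woW woV uncovered.
have wfW : well_founded ltW by case: woW.
pose body (w : W) (g : W -> V) : V := wmin ltV v0 (S `\` g @` (A `&` seg ltW w)).
pose F (w : W) (rec : forall w', ltW w' w -> V) : V :=
  body w (fun w' => match pselect (ltW w' w) with left h => rec w' h | right _ => v0 end).
pose G := Fix wfW (fun _ => V) F.
have img_eq w (g1 g2 : W -> V) : (forall w', ltW w' w -> g1 w' = g2 w') ->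
    g1 @` (A `&` seg ltW w) = g2 @` (A `&` seg ltW w).
  by move=> e; apply/seteqP; split=> y [x [Ax xw] <-]; exists x => //; rewrite e.
have GE w : G w = body w G.
  rewrite /G Fix_eq /F /body; last first.
    move=> x f g e; congr (wmin _ _ (_ `\` _)); apply: img_eq => w' hw'.
    by case: pselect => // h; rewrite e.
  by congr (wmin _ _ (_ `\` _)); apply: img_eq => w' hw'; case: pselect.
have GP w : A w -> (S (G w) /\ ~ (G @` (A `&` seg ltW w)) (G w)) /\
    forall y, S y -> ~ (G @` (A `&` seg ltW w)) y -> ~ ltV y (G w).
  move=> Aw; rewrite GE.
  have ne : (S `\` G @` (A `&` seg ltW w)) !=set0.
    apply: contrapT => h; apply: (uncovered w Aw G) => y Sy.
    by apply: contrapT => ny; apply: h; exists y; split.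
  have [h1 h2] := wminP woV v0 ne.
  by split; [exact: h1|move=> y Sy ny; apply: h2; split].
have mono w1 w2 : A w1 -> A w2 -> ltW w1 w2 -> ltV (G w1) (G w2).
  move=> A1 A2 w12; have [[S1 n1] m1] := GP w1 A1; have [[S2 n2] m2] := GP w2 A2.
  case: (wo_total woV (G w1) (G w2)) => [//|e|lt21]; exfalso.
  - by apply: n2; exists w1 => //; split.
  - apply: (m1 (G w2) S2) => // -[x [Ax xw1] ex]; apply: n2.
    by exists x => //; split => //; apply: (wo_trans woW xw1 w12).
exists G; split => [w Aw|//|w y Aw Sy yw]; first by case: (GP w Aw) => -[].
have [_ m] := GP w Aw.
have : (G @` (A `&` seg ltW w)) y by apply: contrapT => ny; exact: (m y Sy ny yw).
by move=> [x [Ax xw] <-]; exists x.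
Qed.

Lemma card_lt_embed_seg K M (ltK : K -> K -> Prop) (ltM : M -> M -> Prop) (m0 : M) :
  well_order ltK -> well_order ltM -> card_lt [set: K] [set: M] ->
  exists c0 (iota : K -> M),
    (forall k, ltM (iota k) c0) /\ (forall x y, iota x = iota y -> x = y).
Proof.
move=> woK woM [KM nMK].
have uncovered w : [set: K] w ->
    forall g : K -> M, ~ ([set: M] `<=` g @` ([set: K] `&` seg ltK w)).
  by move=> _ g sub; apply: nMK; apply: card_le_trans (card_le_surj sub) (card_leT _).
have [G [_ G_mono G_init]] := increasing_enum m0 woK woM uncovered.
have [c0 nc0] : exists c0, ~ (G @` [set: K]) c0.
  apply: contrapT => h; apply: nMK; apply: (card_le_surj (g := G)) => y _.
  by apply: contrapT => ny; apply: h; exists y.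
exists c0, G; split => [k|x y]; last exact: (wo_incr_inj woK woM G_mono I I).
case: (wo_total woM (G k) c0) => [//|e|h]; first by exfalso; apply: nc0; exists k.
by have [w' [_ _ e]] := G_init k c0 I I h; exfalso; apply: nc0; exists w'.
Qed.

Definition godel_lt {T} (lt : T -> T -> Prop) (p q : T * T) : Prop :=
  lt (wmax lt p.1 p.2) (wmax lt q.1 q.2) \/
  (wmax lt p.1 p.2 = wmax lt q.1 q.2 /\ (lt p.1 q.1 \/ (p.1 = q.1 /\ lt p.2 q.2))).

Section Hessenberg.
Variables (T : Type) (lt : T -> T -> Prop).
Hypothesis wo : well_order lt.

Lemma godel_wo : well_order (godel_lt lt).
Proof.
split.
- move=> [a b]; rewrite /godel_lt /= => -[h|[_ [h|[_ h]]]]; exact: (wo_irr wo h).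
- move=> [a b] [c d] [e f]; rewrite /godel_lt /=.
  set m1 := wmax lt a b; set m2 := wmax lt c d; set m3 := wmax lt e f.
  move=> [h1|[e1 h1]] [h2|[e2 h2]].
  + by left; exact: (wo_trans wo h1 h2).
  + by left; rewrite -e2.
  + by left; rewrite e1.
  + right; split; first by rewrite e1.
    case: h1 => [h1|[e3 h1]]; case: h2 => [h2|[e4 h2]].
    * by left; exact: (wo_trans wo h1 h2).
    * by left; rewrite -e4.
    * by left; rewrite e3.
    * by right; split; [rewrite e3|exact: (wo_trans wo h1 h2)].
- move=> [a b] [c d]; rewrite /godel_lt /=.
  case: (wo_total wo (wmax lt a b) (wmax lt c d)) => [h|e|h].
  + by apply: Or31; left.
  + case: (wo_total wo a c) => [h|e2|h].
    * by apply: Or31; right; split => //; left.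
    * case: (wo_total wo b d) => [h|e3|h].
      -- by apply: Or31; right; split => //; right.
      -- by apply: Or32; rewrite e2 e3.
      -- by apply: Or33; right; split => //; right.
    * by apply: Or33; right; split => //; left.
  + by apply: Or33; left.
- have wf : well_founded lt by case: wo.
  suff Hn n a b : wmax lt a b = n -> Acc (godel_lt lt) (a, b).
    by move=> [a b]; exact: (Hn _ a b erefl).
  elim: (wf n) a b => {}n _ IHn a; elim: (wf a) => {}a _ IHa b.
  elim: (wf b) => {}b _ IHb eab; constructor => -[c d]; rewrite /godel_lt /= eab.
  move=> [h|[e [h|[e2 h]]]].
  + exact: (IHn _ h c d erefl).
  + exact: (IHa c h d e).
  + rewrite e2; apply: IHb => //; rewrite -e2 //.
Qed.

Lemma godel_lt_closed_sq p q : godel_lt lt q p -> closed_sq lt (wmax lt p.1 p.2) q.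
Proof.
move=> h; have hm : ~ lt (wmax lt p.1 p.2) (wmax lt q.1 q.2).
  by case: h => [/(wo_asym wo)//|[-> _]]; exact: wo_irr.
by split=> hh; apply: hm; apply: (wo_lt_le wo hh); [exact: wmax_l|exact: wmax_r].
Qed.

Lemma closed_sq_finite c : finite_set (seg lt c) -> finite_set (closed_sq lt c).
Proof.
move=> fin; apply: (sub_finite_set (B := (seg lt c `|` [set c]) `*` (seg lt c `|` [set c]))).
  move=> [q1 q2] [h1 h2]; split => /=.
    by case: (wo_nlt wo h1) => [->|h]; [right|left].
  by case: (wo_nlt wo h2) => [->|h]; [right|left].
by apply: finite_setX; rewrite finite_setU; split => //; exact: finite_set1.
Qed.

Lemma closed_seg_card_le c : infinite_set (seg lt c) -> sq lt c #<= seg lt c ->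
  [set z | ~ lt c z] #<= seg lt c.
Proof.
move=> infc sqc; have [a0 [a1 [A0 A1 n01]]] := infinite_set_two infc.
apply: (card_le_trans _ sqc).
apply: (card_le_inj (f := fun z => if `[< z = c >] then (a0, a1) else (z, a0))).
  move=> z hz; case: asboolP => [_|n]; first by split.
  by split => //=; case: (wo_nlt wo hz) => // e; exfalso; apply: n.
move=> x y hx hy; case: asboolP => [->|nx]; case: asboolP => [->|ny] //.
- by move=> [e1 e2]; exfalso; apply: n01.
- by move=> [e1 e2]; exfalso; apply: n01.
- by case.
Qed.

(* Hessenberg: |c × c| = |c| for infinite c, by enumerating c × c in Gödel's
   order; below a cardinal c every Gödel segment is too small to exhaust c. *)
Lemma sq_card_le_seg c : infinite_set (seg lt c) -> sq lt c #<= seg lt c.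
Proof.
have wf : well_founded lt by case: wo.
elim: (wf c) => {}c _ IH infc.
case: (pselect (exists m, lt m c /\ seg lt c #<= seg lt m)) => [[m [mc le]]|small].
  have infm : infinite_set (seg lt m) by move=> fin; apply: infc; exact: (card_le_finite le fin).
  have [f [fS finj]] := card_le_inj_ex le (infinite_setN0 infc).
  apply: (card_le_trans (card_le_square fS finj)); apply: (card_le_trans (IH m mc infm)).
  by apply: subset_card_le => x xm; exact: (wo_trans wo xm mc).
have uncovered w : sq lt c w -> forall g : T * T -> T,
    ~ (seg lt c `<=` g @` (sq lt c `&` seg (godel_lt lt) w)).
  move=> [w1c w2c] g sub; set mx := wmax lt w.1 w.2.
  have mxc : lt mx c by exact: wmax_lt.
  have le1 : seg lt c #<= closed_sq lt mx.
    apply: (card_le_trans (card_le_surj sub)).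
    by apply: subset_card_le => q [_ gq]; exact: (godel_lt_closed_sq gq).
  case: (pselect (finite_set (seg lt mx))) => [fin|infm].
    by apply: infc; exact: (card_le_finite le1 (closed_sq_finite fin)).
  apply: small; exists mx; split => //; apply: (card_le_trans le1).
  have IHm := IH mx mxc infm.
  have [j [jS jinj]] := card_le_inj_ex (closed_seg_card_le infm IHm)
    (ex_intro _ mx (wo_irr wo (x:=mx))).
  exact: (card_le_trans (card_le_square jS jinj) IHm).
have [G [GS G_mono _]] := increasing_enum c godel_wo wo uncovered.
exact: (card_le_inj GS (wo_incr_inj godel_wo wo G_mono)).
Qed.

End Hessenberg.

Lemma shift_above M (lt : M -> M -> Prop) (c0 : M) :
  well_order lt -> infinite_set (seg lt c0) -> (forall m, ~ ([set: M] #<= seg lt m)) ->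
  exists G : M -> M, [/\ forall y, ~ lt (G y) c0,
    forall x y, lt x y -> lt (G x) (G y) & forall y, ~ lt (G y) y].
Proof.
move=> wo inf small.
(* a covering of [c0, μ) from below w would inject μ into m × m, m = max c0 w *)
have uncovered w : [set: M] w -> forall g : M -> M,
    ~ ([set y | ~ lt y c0] `<=` g @` ([set: M] `&` seg lt w)).
  move=> _ g sub; set m := wmax lt c0 w.
  have c0m : ~ lt m c0 by exact: wmax_l.
  have wm : ~ lt m w by exact: wmax_r.
  have infm := infinite_seg_le wo inf c0m.
  have [a0 [a1 [A0 A1 n01]]] := infinite_set_two inf.
  pose pick y := epsilon (inhabits c0) (fun z => lt z w /\ g z = y).
  have pickP y : ~ lt y c0 -> lt (pick y) w /\ g (pick y) = y.
    move=> /sub [z [_ zw] gz]; exact: (epsilon_spec (inhabits c0) (fun z => lt z w /\ g z = y) (ex_intro _ z (conj zw gz))).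
  apply: (small m); apply: (card_le_trans _ (sq_card_le_seg wo infm)).
  apply: (card_le_inj (f := fun y => if `[< lt y c0 >] then (y, a0) else (pick y, a1))).
    move=> y _; case: asboolP => h; split => /=.
    - exact: (wo_lt_le wo h c0m).
    - exact: (wo_lt_le wo A0 c0m).
    - exact: (wo_lt_le wo (pickP y h).1 wm).
    - exact: (wo_lt_le wo A1 c0m).
  move=> x y _ _; case: asboolP => hx; case: asboolP => hy.
  - by case=> ->.
  - by case=> _ e; exfalso; apply: n01.
  - by case=> _ e; exfalso; apply: n01.
  - move=> exy; have e : pick x = pick y by case: exy.
    by rewrite -(pickP x hx).2 -(pickP y hy).2 e.
have [G [GS G_mono _]] := increasing_enum c0 wo wo uncovered.
exists G; split => [y|x y h|y0 h0]; [exact: GS|exact: G_mono|].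
have [m [hm mmin]] := wo_min wo (ex_intro _ y0 h0 : [set y | lt (G y) y] !=set0).
by apply: (mmin (G m)) => //; apply: G_mono.
Qed.

Definition shift_pairing {M} (lt : M -> M -> Prop) (c0 : M) (G : M -> M)
    (q : M -> M * M -> M) :=
  [/\ forall y, ~ lt (G y) c0, forall x y, lt x y -> lt (G x) (G y),
      forall y, ~ lt (G y) y,
      forall m p, ~ lt m c0 -> sq lt m p -> lt (q m p) m &
      forall m p p', ~ lt m c0 -> sq lt m p -> sq lt m p' -> q m p = q m p' -> p = p'].

Lemma shift_pairing_exists M (lt : M -> M -> Prop) (c0 : M) :
  well_order lt -> infinite_set (seg lt c0) -> (forall m, ~ ([set: M] #<= seg lt m)) ->
  exists G q, shift_pairing lt c0 G q.
Proof.
move=> wo infc0 small.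
have [G [G_c0 G_mono G_ge]] := shift_above wo infc0 small.
have pairing m : exists qm : M * M -> M, ~ lt m c0 ->
    (forall p, sq lt m p -> lt (qm p) m) /\
    (forall p p', sq lt m p -> sq lt m p' -> qm p = qm p' -> p = p').
  case: (pselect (lt m c0)) => [mc0|mc0]; first by exists (fun=> c0).
  have infm := infinite_seg_le wo infc0 mc0.
  have [a0 a0m] := infinite_setN0 infm.
  have sq0 : sq lt m !=set0 by exists (a0, a0).
  have [f [fS finj]] := card_le_inj_ex (sq_card_le_seg wo infm) sq0.
  by exists f.
have /choice[q qP] := pairing.
exists G, q; split => // [m p mc0|m p p' mc0].
- exact: ((qP m mc0).1 p).
- exact: ((qP m mc0).2 p p').
Qed.

Definition bd_basic_of {D R} (lt : D -> D -> Prop) (p : lt_pow lt R) : set (D -> R) :=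
  @bd_basic D R lt (projT1 p) (projT2 p).

Lemma bd_basic_base D R (lt : D -> D -> Prop) :
  is_base (@bd_open D R lt) (bd_basic_of (lt:=lt) @` [set: lt_pow lt R]).
Proof.
split; first by move=> b [p _ <-] f bf; exists (projT1 p), (projT2 p); split.
move=> O x oO Ox; have [a [s [h1 h2]]] := oO x Ox.
by exists (bd_basic_of (existT _ a s)); split => //; exists (existT _ a s).
Qed.

(* Each member of an open partition contains a basic set, and these are distinct. *)
Lemma open_partition_card_le_base X (op : set X -> Prop) P B :
  open_partition op P -> is_base op B -> P #<= B.
Proof.
move=> [Pop Pdis Pcov] [Bop Bb].
pose f (U : set X) := epsilon (inhabits set0) (fun b => B b /\ b `<=` U /\ b !=set0).
have fP U : P U -> B (f U) /\ f U `<=` U /\ f U !=set0.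
  move=> PU; apply: (epsilon_spec (inhabits set0) (fun b => B b /\ b `<=` U /\ b !=set0)).
  have [oU [x Ux]] := Pop U PU; have [b [Bb1 bx bU]] := Bb U x oU Ux.
  by exists b; split => //; split => //; exists x.
apply: (card_le_inj (f := f)); first by move=> U PU; case: (fP U PU).
move=> U V PU PV e; apply: contrapT => nUV.
have [_ [fU [x fx]]] := fP U PU; have [_ [fV _]] := fP V PV.
have : (U `&` V) x by split; [apply: fU | apply: fV; rewrite -e].
by rewrite (Pdis U V PU PV nUV).
Qed.

Lemma weight_of_partition D R U (lt : D -> D -> Prop) (L : set U) P :
  open_partition (@bd_open D R lt) P -> P #= L -> [set: lt_pow lt R] #<= L ->
  weight_is (@bd_open D R lt) L.
Proof.
move=> oP /card_eqPle [_ LP] TL.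
split; last by move=> B bB; exact: (card_le_trans LP (open_partition_card_le_base oP bB)).
exists (bd_basic_of (lt:=lt) @` [set: lt_pow lt R]); split; first exact: bd_basic_base.
apply: Cantor_Bernstein; first exact: (card_le_trans (card_image_le _ _) TL).
exact: (card_le_trans LP (open_partition_card_le_base oP (bd_basic_base _ _))).
Qed.

Definition stopping {D R} (lt : D -> D -> Prop) (beta : (D -> R) -> D) :=
  forall f g, (forall x, lt x (beta f) -> g x = f x) -> beta g = beta f.

Definition piece {D R} (lt : D -> D -> Prop) (beta : (D -> R) -> D) (f : D -> R) :
  set (D -> R) := [set g | forall x, lt x (beta f) -> g x = f x].

Section Stopping.
Variables (D R : Type) (lt : D -> D -> Prop) (beta : (D -> R) -> D).
Hypothesis st : stopping lt beta.

Lemma piece_eq f g : piece lt beta f g -> piece lt beta g = piece lt beta f.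
Proof.
move=> pg; have e := st pg.
by apply/seteqP; split=> h; rewrite /piece /= e => hh x xl; rewrite hh // pg.
Qed.

Lemma stopping_open_partition :
  open_partition (bd_open lt) [set U | exists f, U = piece lt beta f].
Proof.
split.
- move=> U [f ->]; split; last by exists f.
  move=> g pg; exists (beta f), (fun p => f (sval p)); split.
    by move=> b h; rewrite pg.
  by move=> h bh x xl; exact: (bh x xl).
- move=> U V [f ->] [g ->] nUV; apply/seteqP; split => // h [hf hg].
  by apply: nUV; rewrite -(piece_eq hf) (piece_eq hg).
- by move=> f; exists (piece lt beta f); split; [exists f|].
Qed.

Lemma pieces_card_eq (Phi : lt_pow lt R -> D -> R) :
  (forall p p', (forall x, lt x (beta (Phi p)) -> Phi p' x = Phi p x) -> p = p') ->
  [set U | exists f, U = piece lt beta f] #= [set: lt_pow lt R].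
Proof.
move=> decode; apply: Cantor_Bernstein.
  apply: (card_le_trans _ (card_image_le (@bd_basic_of D R lt) [set: lt_pow lt R])).
  apply: subset_card_le => U [f ->].
  by exists (existT _ (beta f) (fun p => f (sval p))).
apply: (card_le_inj (f := fun p => piece lt beta (Phi p))); first by move=> p _; exists (Phi p).
move=> p p' _ _ e; apply: decode.
have : piece lt beta (Phi p') (Phi p') by [].
by rewrite -e.
Qed.

End Stopping.

Lemma coded_stopping_ex M R (lt : M -> M -> Prop) (C : set M) (c0 : M)
    (u : M -> M -> R) (h : M -> M) :
  well_order lt ->
  (forall c c', C c -> C c' -> (forall x, lt x c0 -> u c x = u c' x) -> c = c') ->
  (forall c, ~ lt (h c) c0) ->
  exists beta : (M -> R) -> M, stopping lt beta /\
    forall f c, C c -> (forall x, lt x c0 -> f x = u c x) -> beta f = h c.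
Proof.
move=> wo u_inj h_ge.
pose codes (f : M -> R) c := C c /\ forall x, lt x c0 -> f x = u c x.
pose beta f := if `[< exists c, codes f c >] then h (epsilon (inhabits c0) (codes f)) else c0.
have beta_ge f : ~ lt (beta f) c0.
  by rewrite /beta; case: asboolP => _; [exact: h_ge|exact: (wo_irr wo)].
have beta_code f c : codes f c -> beta f = h c.
  move=> [Cc fc]; rewrite /beta; case: asboolP => [ex|[]]; last by exists c.
  have [Cc' fc'] := epsilon_spec (inhabits c0) (codes f) ex.
  by congr h; apply: u_inj => // x xc0; rewrite -fc' // fc.
exists beta; split => [f g fg|f c Cc fc]; last exact: beta_code.
rewrite /beta; have -> : codes g = codes f; last by [].
apply: boolp.funext => c; apply: boolp.propext; rewrite /codes.
have gf x : lt x c0 -> g x = f x by move=> xc0; apply: fg; exact: (wo_lt_le wo xc0 (beta_ge f)).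
by split => -[Cc h']; split => // x xc0; [rewrite -gf // h' | rewrite gf // h'].
Qed.

Definition ext_pow {D R} (lt : D -> D -> Prop) (r0 : R) (p : lt_pow lt R) (z : D) : R :=
  match pselect (lt z (projT1 p)) with
  | left h => projT2 p (exist _ z h) | right _ => r0 end.

Lemma ext_powE D R (lt : D -> D -> Prop) (r0 : R) p z (hz : lt z (projT1 p)) :
  ext_pow r0 p z = projT2 p (exist _ z hz).
Proof. by rewrite /ext_pow; case: pselect => // h; rewrite (proof_irrelevance _ h hz). Qed.

Lemma ext_pow_inj D R (lt : D -> D -> Prop) (r0 : R) (p p' : lt_pow lt R) :
  projT1 p = projT1 p' ->
  (forall z, lt z (projT1 p) -> ext_pow r0 p z = ext_pow r0 p' z) -> p = p'.
Proof.
case: p => a s; case: p' => a' s' /= ea; subst a' => agree.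
congr existT; apply: boolp.funext => -[z hz].
by have := agree z hz; rewrite !ext_powE.
Qed.

(* Through an injection e : δ → R, the value f z0 names the predecessor of the
   length β f; a sequence of length a is planted at the successors below a. *)
Lemma bd_partition_of_card_le K R (ltK : K -> K -> Prop) (k0 : K) :
  well_order ltK -> (forall a, exists b, ltK a b) -> [set: K] #<= [set: R] ->
  exists P, open_partition (@bd_open K R ltK) P /\ P #= [set: lt_pow ltK R].
Proof.
move=> wo no_max KR.
have [e [_ e_inj]] := card_le_inj_ex KR (ex_intro _ k0 I).
have [z0 z0_bot] := wo_bottom wo k0.
have z0_lt := bottom_lt_wsucc wo no_max z0_bot.
have sc_inj x y : setT x -> setT y -> wsucc ltK x = wsucc ltK y -> x = y.
  by move=> _ _; exact: (wsucc_inj wo no_max).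
pose beta (f : K -> R) := wsucc ltK (extend_along k0 setT e id k0 (f z0)).
have st : stopping ltK beta by move=> f g fg; rewrite /beta fg //; exact: z0_lt.
pose plant (p : lt_pow ltK R) (y : K) : R :=
  if `[< y = z0 >] then e (wsucc ltK (projT1 p))
  else extend_along k0 setT (wsucc ltK) (ext_pow (e k0) p) (e k0) y.
have plant_z0 p : plant p z0 = e (wsucc ltK (projT1 p)) by rewrite /plant; case: asboolP.
have plant_succ p b : plant p (wsucc ltK b) = ext_pow (e k0) p b.
  rewrite /plant; case: asboolP => [eb|_]; last exact: (extend_alongE _ _ _ sc_inj).
  by have := z0_lt b; rewrite eb => /(wo_irr wo).
exists [set U | exists f, U = piece ltK beta f]; split; first exact: stopping_open_partition.
apply: (pieces_card_eq (Phi := plant)) => p p'.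
rewrite /beta plant_z0 (extend_alongE _ _ _ e_inj) // => agree.
have ea : projT1 p = projT1 p'.
  have := agree z0 (z0_lt _); rewrite !plant_z0 => /(e_inj _ _ I I) ea.
  exact: (esym (wsucc_inj wo no_max ea)).
apply: (ext_pow_inj (r0 := e k0) ea) => b ba.
have := agree (wsucc ltK b); rewrite !plant_succ => -> //.
exact: (wo_trans wo (wsucc_mono wo no_max ba) (wsuccP wo no_max _).1).
Qed.

Section Coding.
Variables (M : Type) (lt : M -> M -> Prop) (c0 : M) (G : M -> M) (q : M -> M * M -> M).
Hypotheses (wo : well_order lt) (sp : shift_pairing lt c0 G q).

Let mc c := wmax lt c c0.

Lemma G_inj x y : G x = G y -> x = y.
Proof.
have [_ G_mono _ _ _] := sp.
exact: (wo_incr_inj (A := setT) wo wo (fun x y _ _ => G_mono x y) I I).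
Qed.

Lemma lt_mc c x : lt x c -> lt x (mc c).
Proof. by move=> xc; apply: (wo_lt_le wo xc); exact: wmax_l. Qed.

Lemma lt_c0_mc c x : lt x c0 -> lt x (mc c).
Proof. by move=> xc0; apply: (wo_lt_le wo xc0); exact: wmax_r. Qed.

Lemma mc_lt_G c x : lt x (mc c) -> lt x (G c).
Proof.
have [G_c0 _ G_ge _ _] := sp.
move=> h; apply: (wo_lt_le wo h); rewrite /mc /wmax.
by case: asboolP => _; [exact: G_c0|exact: G_ge].
Qed.

(* s ∈ ^ακ is coded by the indicator, on the ordinal G α, of the pairing
   image of the graph of s. *)
Lemma lt_pow_card_le_bool K (k0 : K) (iota : K -> M) :
  (forall k, lt (iota k) c0) -> (forall x y, iota x = iota y -> x = y) ->
  [set: lt_pow lt K] #<= [set: lt_pow lt bool].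
Proof.
move=> iota_lt iota_inj; have [_ _ _ q_lt q_inj] := sp.
pose graph (p : lt_pow lt K) (y : M) :=
  exists2 z, lt z (projT1 p) & y = q (mc (projT1 p)) (z, iota (ext_pow k0 p z)).
pose code p : lt_pow lt bool := existT _ (G (projT1 p)) (fun y => `[< graph p (sval y) >]).
apply: (card_le_inj (f := code)) => // -[a s] [a' s'] _ _ e.
have ea : a = a' by apply: G_inj; exact: (projT1_eq e).
subst a'; have {}e := inj_pair2 _ _ _ _ _ e.
apply: (ext_pow_inj (r0 := k0)) => //= z za.
have in_sq z' k : lt z' a -> sq lt (mc a) (z', iota k).
  by move=> z'a; split; [exact: (lt_mc z'a)|exact: (lt_c0_mc _ (iota_lt k))].
set y := q (mc a) (z, iota (ext_pow k0 (existT _ a s) z)).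
have yG : lt y (G a) by apply: mc_lt_G; apply: q_lt; [exact: (wmax_r wo)|exact: in_sq].
have := congr1 (fun t => t (exist _ y yG)) e; rewrite /=.
case: asboolP => [_|[]]; last by exists z.
case: asboolP => [[z' z'a ey] _|//].
have [ez ei] := q_inj _ _ _ (@wmax_r _ _ wo _ _) (in_sq _ _ za) (in_sq _ _ z'a) ey.
by subst z'; exact: (iota_inj _ _ ei).
Qed.

Definition slot c z r := G (q (mc c) (z, r)).

Lemma slot_ge_c0 c z r : ~ lt (slot c z r) c0.
Proof. by have [G_c0 _ _ _ _] := sp; exact: G_c0. Qed.

Lemma slot_lt c z r : lt z (mc c) -> lt r c0 -> lt (slot c z r) (G (mc c)).
Proof.
move=> zc rc0; have [_ G_mono _ q_lt _] := sp.
by apply: G_mono; apply: q_lt; [exact: (wmax_r wo)|split => //; exact: lt_c0_mc].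
Qed.

Lemma slot_inj c z r z' r' : lt z (mc c) -> lt r c0 -> lt z' (mc c) -> lt r' c0 ->
  slot c z r = slot c z' r' -> z = z' /\ r = r'.
Proof.
move=> zc rc0 zc' rc0' /G_inj e; have [_ _ _ _ q_inj] := sp.
have sq_mc x y : lt x (mc c) -> lt y c0 -> sq lt (mc c) (x, y).
  by move=> xc yc0; split => //; exact: lt_c0_mc.
by case: (q_inj _ _ _ (@wmax_r _ _ wo _ _) (sq_mc _ _ zc rc0) (sq_mc _ _ zc' rc0') e).
Qed.

Section CofinalCoding.
Variables (R : Type) (r0 r1 : R) (C : set M) (j : M -> M) (z0 z1 : M).
Hypotheses (r01 : r0 <> r1) (C_cof : forall a, exists c, C c /\ lt a c)
  (j_lt : forall c, C c -> lt (j c) c0)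
  (j_inj : forall c c', C c -> C c' -> j c = j c' -> c = c')
  (z0_lt : lt z0 c0) (z1_lt : lt z1 c0) (z01 : z0 <> z1).

Let u c x : R := if `[< x = j c >] then r1 else r0.

Lemma u_inj c c' : C c -> C c' -> (forall x, lt x c0 -> u c x = u c' x) -> c = c'.
Proof.
move=> Cc Cc' h; have := h (j c) (j_lt Cc); rewrite /u.
case: asboolP => [_|[]] //; case: asboolP => [e _|_ e]; first exact: j_inj.
by exfalso; apply: r01; rewrite e.
Qed.

Let ca a := epsilon (inhabits c0) (fun c => C c /\ lt a c).

Lemma caP a : C (ca a) /\ lt a (ca a).
Proof. exact: (epsilon_spec (inhabits c0) (fun c => C c /\ lt a c) (C_cof a)). Qed.

(* The positions above c0 used by a sequence of length a: (z, z0) for z < a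
   carries its value at z, and (a, z1) marks the length. *)
Let dom a : set (M * M) :=
  [set zr | (lt zr.1 a /\ zr.2 = z0) \/ (zr.1 = a /\ zr.2 = z1)].

Lemma dom_range a zr : dom a zr -> lt zr.1 (mc (ca a)) /\ lt zr.2 c0.
Proof.
have [_ ac] := caP a.
by case=> -[za ->]; split => //; apply: lt_mc; [exact: (wo_trans wo za ac)|rewrite za].
Qed.

Lemma slot_dom_inj a zr zr' : dom a zr -> dom a zr' ->
  slot (ca a) zr.1 zr.2 = slot (ca a) zr'.1 zr'.2 -> zr = zr'.
Proof.
case: zr zr' => [z r] [z' r'] /dom_range [zc rc] /dom_range [zc' rc'] e.
by case: (slot_inj zc rc zc' rc' e) => /= -> ->.
Qed.

Definition plant (p : lt_pow lt R) (y : M) : R :=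
  if `[< lt y c0 >] then u (ca (projT1 p)) y
  else extend_along (z0, z0) (dom (projT1 p))
    (fun zr => slot (ca (projT1 p)) zr.1 zr.2)
    (fun zr => if `[< zr.2 = z0 >] then ext_pow r0 p zr.1 else r1) r0 y.

Lemma plant_below p x : lt x c0 -> plant p x = u (ca (projT1 p)) x.
Proof. by rewrite /plant; case: asboolP. Qed.

Lemma plant_slot p z r : dom (projT1 p) (z, r) ->
  plant p (slot (ca (projT1 p)) z r) = if `[< r = z0 >] then ext_pow r0 p z else r1.
Proof.
move=> dzr; rewrite /plant; case: asboolP => [h|_]; first by case: (slot_ge_c0 h).
exact: (extend_alongE _ _ _ (@slot_dom_inj _) dzr).
Qed.

Lemma plant_marker_out p b : lt b (mc (ca (projT1 p))) -> b <> projT1 p ->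
  plant p (slot (ca (projT1 p)) b z1) = r0.
Proof.
move=> bc nb; rewrite /plant; case: asboolP => [h|_]; first by case: (slot_ge_c0 h).
apply: extend_along_out => -[zr [dzr e]].
have [zc rc] := dom_range dzr; have [ez er] := slot_inj zc rc bc z1_lt e.
case: dzr => [[_ zr0]|[zra _]]; first by apply: z01; rewrite -zr0 er.
by apply: nb; rewrite -ez.
Qed.

Lemma plant_decode p p' :
  (forall x, lt x (G (mc (ca (projT1 p)))) -> plant p' x = plant p x) -> p = p'.
Proof.
have [G_c0 _ _ _ _] := sp.
move=> agree; have [Cc ac] := caP (projT1 p); set c := ca (projT1 p) in Cc ac agree *.
have ec : ca (projT1 p') = c.
  apply: u_inj (caP _).1 Cc _ => x xc0.
  rewrite -(plant_below p' xc0) -(plant_below p xc0) agree //.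
  exact: (wo_lt_le wo xc0 (G_c0 _)).
have ea : projT1 p' = projT1 p.
  apply: contrapT => na.
  have ac' : lt (projT1 p) (mc (ca (projT1 p'))) by rewrite ec; exact: lt_mc.
  have out := plant_marker_out ac' (nesym na); rewrite ec in out.
  have marker : plant p (slot c (projT1 p) z1) = r1.
    by rewrite plant_slot; [case: asboolP => // /esym|right].
  have := agree _ (slot_lt (lt_mc ac) z1_lt); rewrite out marker.
  exact: r01.
apply: (ext_pow_inj (r0 := r0) (esym ea)) => z za.
have dz : dom (projT1 p) (z, z0) by left.
have dz' : dom (projT1 p') (z, z0) by left; rewrite ea.
have e' := plant_slot dz'; rewrite ec in e'.
have := agree _ (slot_lt (lt_mc (wo_trans wo za ac)) z0_lt).
by rewrite e' (plant_slot dz); case: asboolP => [_ ->|[]].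
Qed.

Lemma bd_partition_coded :
  exists P, open_partition (@bd_open M R lt) P /\ P #= [set: lt_pow lt R].
Proof.
have [G_c0 _ _ _ _] := sp.
have [beta [st beta_code]] := coded_stopping_ex (h := fun c => G (mc c)) wo u_inj (fun=> G_c0 _).
exists [set U | exists f, U = piece lt beta f]; split; first exact: stopping_open_partition.
apply: (pieces_card_eq (Phi := plant)) => p p'.
by rewrite (beta_code _ _ (caP _).1 (plant_below p)); exact: plant_decode.
Qed.

End CofinalCoding.

Lemma bd_partition_of_cofinal R (r0 r1 : R) (C : set M) :
  infinite_set (seg lt c0) -> (forall a, exists c, C c /\ lt a c) ->
  C #<= seg lt c0 -> r0 <> r1 ->
  exists P, open_partition (@bd_open M R lt) P /\ P #= [set: lt_pow lt R].
Proof.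
move=> infc0 C_cof Cc0 r01.
have [z0 [z1 [z0_lt z1_lt z01]]] := infinite_set_two infc0.
have [c1 [Cc1 _]] := C_cof c0.
have [j [j_lt j_inj]] := card_le_inj_ex Cc0 (ex_intro _ c1 Cc1).
exact: (bd_partition_coded r01 C_cof j_lt j_inj z0_lt z1_lt z01).
Qed.

End Coding.

Lemma lt_pow_bool_card_le M K (lt : M -> M -> Prop) (k0 k1 : K) : k0 <> k1 ->
  [set: lt_pow lt bool] #<= [set: lt_pow lt K].
Proof.
move=> k01; pose lift (p : lt_pow lt bool) : lt_pow lt K :=
  existT _ (projT1 p) (fun y => if projT2 p y then k1 else k0).
apply: (card_le_inj (f := lift)) => // -[a t] [a' t'] _ _ /= e.
have ea := projT1_eq e; simpl in ea; subst a'.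
have {}e := inj_pair2 _ _ _ _ _ e.
congr existT; apply: boolp.funext => y.
have := congr1 (fun f => f y) e; rewrite /=.
by case: (t y); case: (t' y) => // h; exfalso; apply: k01.
Qed.

Lemma cofinal_card_no_max T U (lt : T -> T -> Prop) (A : set U) :
  (forall C, cofinal lt C -> A #<= C) -> infinite_set A -> forall a, exists b, lt a b.
Proof.
move=> cofA infA a; apply: contrapT => n; apply: infA.
apply: (card_le_finite _ (finite_set1 a)); apply: cofA => x; exists a; split => //.
by move=> ax; apply: n; exists x.
Qed.

Lemma cofinal_lt T (lt : T -> T -> Prop) (C : set T) :
  well_order lt -> (forall a, exists b, lt a b) -> cofinal lt C ->
  forall a, exists c, C c /\ lt a c.
Proof.
move=> wo no_max cofC a; have [b ab] := no_max a; have [c [Cc nc]] := cofC b.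
by exists c; split => //; exact: (wo_lt_le wo ab nc).
Qed.

Lemma cf_singular_card_lt T K (lt : T -> T -> Prop) :
  cf_is lt K -> singular lt -> card_lt [set: K] [set: T].
Proof.
move=> [_ cf_min] [C [cofC [_ CT]]]; have KC := cf_min C cofC.
split; first exact: (card_le_trans KC (card_leT C)).
by move=> TK; apply: CT; exact: (card_le_trans TK KC).
Qed.

Theorem mainTheorem2 (K : Type) (ltK : K -> K -> Prop)
    (M : Type) (ltM : M -> M -> Prop) :
  infinite_cardinal ltK -> regular ltK ->
  infinite_cardinal ltM -> singular ltM -> cf_is ltM K ->
  [/\ weight_is (@bd_open K M ltK) [set: lt_pow ltK M],
      weight_is (@bd_open M bool ltM) [set: lt_pow ltM bool],
      weight_is (@bd_open M K ltM) [set: lt_pow ltM bool],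
      weight_is (@bd_open M M ltM) [set: lt_pow ltM M] &
      [/\ exists P, open_partition (@bd_open K M ltK) P /\ P #= [set: lt_pow ltK M],
          exists P, open_partition (@bd_open M bool ltM) P /\ P #= [set: lt_pow ltM bool],
          exists P, open_partition (@bd_open M K ltM) P /\ P #= [set: lt_pow ltM bool] &
          exists P, open_partition (@bd_open M M ltM) P /\ P #= [set: lt_pow ltM M]]].
Proof.
move=> [[woK _] infK] regK [[woM initM] infM] singM cfK.
have KM := cf_singular_card_lt cfK singM.
have [[C [cofC /card_eqPle [CK _]]] cf_min] := cfK.
have [k0 [k1 [_ _ k01]]] := infinite_set_two infK.
have [m0 [m1 [_ _ m01]]] := infinite_set_two infM.
have [c0 [iota [iota_lt iota_inj]]] := card_lt_embed_seg m0 woK woM KM.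
have Kc0 : [set: K] #<= seg ltM c0.
  by apply: (card_le_inj (f := iota)) => [k _|x y _ _ /iota_inj].
have infc0 : infinite_set (seg ltM c0) by move=> fin; apply: infK; exact: (card_le_finite Kc0 fin).
have [G [q sp]] := shift_pairing_exists woM infc0 (fun m => (initM m).2).
have C_cof := cofinal_lt woM (cofinal_card_no_max cf_min infK) cofC.
have part R (r0 r1 : R) (r01 : r0 <> r1) :=
  bd_partition_of_cofinal woM sp infc0 C_cof (card_le_trans CK Kc0) r01.
have [P1 [oP1 eP1]] := bd_partition_of_card_le k0 woK (cofinal_card_no_max regK infK) KM.1.
have [P2 [oP2 eP2]] := part _ false true ltac:(by []).
have [P3 [oP3 eP3]] := part _ _ _ k01.
have [P4 [oP4 eP4]] := part _ _ _ m01.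
have KB := lt_pow_card_le_bool woM sp k0 iota_lt iota_inj.
have eP3B := card_eq_trans eP3 (Cantor_Bernstein KB (lt_pow_bool_card_le ltM k01)).
split; first exact: (weight_of_partition oP1 eP1 (card_lexx _)).
- exact: (weight_of_partition oP2 eP2 (card_lexx _)).
- exact: (weight_of_partition oP3 eP3B KB).
- exact: (weight_of_partition oP4 eP4 (card_lexx _)).
- by split; [exists P1|exists P2|exists P3|exists P4].
Qed.
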